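(* Fix a real number $x>1$. There is a function $g:[0,1)\to\mathbb{R}$ with $g(\epsilon)/\epsilon\to 0$ as $\epsilon\to 0^+$ such that the following holds. Let $0\le\epsilon<1$ and $y=1+\epsilon$, let $N\ge1$ and $n\ge1$ be integers, and let $\mathcal{S}_0,\dots,\mathcal{S}_{n-1}$ be nonempty sets of QPSK sequences of length $N$ such that, for every $0\le i\le n-1$: (a) $\mathrm{PEP}(\mathbf{s})\le x\,y^{2i}N$ for every $\mathbf{s}\in\mathcal{S}_i$; and (b) if $\mathbf{s}\in\mathcal{S}_i$ then $j^m\mathbf{s}\in\mathcal{S}_i$ for every $m\in\mathbb{Z}_4$. Let $\mathcal{A}$ be the set of all $2^{2n}$-QAM sequences associated with tuples $(\mathbf{s}_0,\dots,\mathbf{s}_{n-1})$ with $\mathbf{s}_i\in\mathcal{S}_i$. Then $$\mathrm{PMEPR}(\mathcal{A})<3x(1+2\epsilon)+g(\epsilon)\quad\text{and}\quad \mathrm{PMEPR}(\mathcal{A})<3xy^2+g(\epsilon).$$ (In the paper's notation: $\mathrm{PMEPR}(\mathcal{A})<3x(1+2\epsilon)+o(\epsilon)$ and $\mathrm{PMEPR}(\mathcal{A})<3xy^2+o(\epsilon)$.)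
   Context: Let $j=\sqrt{-1}$. Fix $T>0$ and reals $f_0,\Delta f$ with $T\Delta f$ a positive integer; set $f_k=f_0+k\Delta f$. For a complex sequence $\mathbf{a}=(a_0,\dots,a_{N-1})$ define $S_{\mathbf{a}}(t)=\sum_{k=0}^{N-1}a_ke^{2\pi j f_k t}$, $P_{\mathbf{a}}(t)=|S_{\mathbf{a}}(t)|^2$, and $\mathrm{PEP}(\mathbf{a})=\sup_{t\in[0,T]}P_{\mathbf{a}}(t)$. A QPSK sequence of length $N$ is a sequence $\mathbf{s}=(s_0,\dots,s_{N-1})$ with every $s_k\in\{1,j,-1,-j\}$; $j^m\mathbf{s}=(j^ms_0,\dots,j^ms_{N-1})$. The $2^{2n}$-QAM sequence associated with QPSK sequences $\mathbf{s}_0,\dots,\mathbf{s}_{n-1}$, $\mathbf{s}_i=(s_{i,0},\dots,s_{i,N-1})$, is $\mathbf{a}=(a_0,\dots,a_{N-1})$ with $a_k=\frac{\sqrt2}{2}e^{\pi j/4}\sum_{i=0}^{n-1}2^{n-1-i}s_{i,k}$. The mean envelope power of $\mathcal{A}$ is $P_{av}(\mathcal{A})=\mathbb{E}\big[\frac1T\int_0^TP_{\mathbf{a}}(t)\,dt\big]=\mathbb{E}\|\mathbf{a}\|^2$, where the expectation is over $\mathbf{a}$ associated with $(\mathbf{s}_0,\dots,\mathbf{s}_{n-1})$ chosen uniformly at random from $\mathcal{S}_0\times\cdots\times\mathcal{S}_{n-1}$ (each $\mathbf{s}_i$ uniform in $\mathcal{S}_i$, independently). The peak-to-mean envelope power ratio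 is $\mathrm{PMEPR}(\mathcal{A})=\max_{\mathbf{a}\in\mathcal{A}}\mathrm{PEP}(\mathbf{a})/P_{av}(\mathcal{A})$. *)

From HB Require Import structures.
From mathcomp Require Import all_boot all_order all_algebra.
From mathcomp Require Import all_classical all_reals all_analysis.
From mathcomp Require Import complex.
Set Implicit Arguments. Unset Strict Implicit. Unset Printing Implicit Defensive.
Import Order.TTheory GRing.Theory Num.Theory ComplexField Normc.
Local Open Scope ring_scope.
Local Open Scope complex_scope.

Section Defs.
Variable R : realType.

Definition cexpj (th : R) : R[i] := (cos th) +i* (sin th).

Definition qpsk (m : 'I_4) : R[i] := 'i ^+ (nat_of_ord m).

(* QPSK sequences of length N, represented by their Z_4 exponent vectors *)
Definition qpsk_seq (N : nat) := {ffun 'I_N -> 'I_4}.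

Definition qrot (N : nat) (m : 'I_4) (s : qpsk_seq N) : qpsk_seq N :=
  [ffun k => s k + m].

Definition qpsk_cplx (N : nat) (s : qpsk_seq N) : 'I_N -> R[i] :=
  fun k => qpsk (s k).

Definition Ssig (f0 df : R) (N : nat) (a : 'I_N -> R[i]) (t : R) : R[i] :=
  \sum_(k < N) a k * cexpj (2 * pi * (f0 + k%:R * df) * t).

Definition Penv (f0 df : R) (N : nat) (a : 'I_N -> R[i]) (t : R) : R :=
  (normc (Ssig f0 df a t)) ^+ 2.

Definition PEP (T f0 df : R) (N : nat) (a : 'I_N -> R[i]) : R :=
  sup [set Penv f0 df a t | t in `[0, T]%classic].

Definition qam (n N : nat) (ss : {ffun 'I_n -> qpsk_seq N}) : 'I_N -> R[i] :=
  fun k => ((Num.sqrt 2 / 2) +i* 0) * cexpj (pi / 4) *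
           \sum_(i < n) (2 ^+ (n.-1 - i))%:C * qpsk (ss i k).

Definition sqnorm (N : nat) (a : 'I_N -> R[i]) : R :=
  \sum_(k < N) (normc (a k)) ^+ 2.

Definition tuples (n N : nat) (S : 'I_n -> {set qpsk_seq N})
  : {set {ffun 'I_n -> qpsk_seq N}} :=
  [set ss : {ffun 'I_n -> qpsk_seq N} | [forall i, ss i \in S i]].

Definition Pav (n N : nat) (S : 'I_n -> {set qpsk_seq N}) : R :=
  (\sum_(ss in tuples S) sqnorm (qam ss)) / (#|tuples S|)%:R.

Definition PMEPR (T f0 df : R) (n N : nat) (S : 'I_n -> {set qpsk_seq N}) : R :=
  (\big[Num.max/0]_(ss in tuples S) PEP T f0 df (qam ss)) / Pav S.

End Defs.

From HB Require Import structures.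
From mathcomp Require Import all_boot all_order all_algebra.
From mathcomp Require Import all_classical all_reals all_analysis.
From mathcomp Require Import complex.
From mathcomp Require Import ring lra.
Set Implicit Arguments. Unset Strict Implicit. Unset Printing Implicit Defensive.
Import Order.TTheory GRing.Theory Num.Theory numFieldNormedType.Exports.
Import ComplexField Normc.
Local Open Scope classical_set_scope.
Local Open Scope ring_scope.

(* The envelope of a QAM sequence is a weighted sum of the envelopes of its
   QPSK components, S_a = K * sum_i 2^(n-1-i) S_(s_i) with |K| = sqrt 2 / 2,
   so the hypothesis on the PEPs gives PEP(a) <= x N (sum_i 2^(n-1-i) y^i)^2 / 2.
   Closure of each S_i under multiplication by j makes the cross terms of
   E||a||^2 cancel, so P_av = N (sum_i 4^(n-1-i)) / 2 = N (4^n - 1) / 6.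
   Since (sum_i 2^(n-1-i) y^i)(2 - y) = 2^n - y^n and 2 - y = 1 - eps, the
   ratio is below 3x / (1 - eps)^2 = 3x (1 + 2 eps) + o(eps). *)

Section ComplexNorm.
Variable R : rcfType.
Local Open Scope complex_scope.

Lemma normc_ge0 (z : R[i]) : 0 <= normc z.
Proof. by case: z => a b; exact: sqrtr_ge0. Qed.

Lemma normc_real (a : R) : normc a%:C = `|a|.
Proof. by rewrite /= expr0n addr0 sqrtr_sqr. Qed.

Lemma normc_sqr_conj (z : R[i]) : (normc z ^+ 2)%:C = z * conjc z.
Proof. by rewrite rmorphXn -sqr_normc normc_def; case: z. Qed.

Lemma conjc_scale (a : R) (z : R[i]) : conjc (a%:C * z) = a%:C * conjc z.
Proof.
by case: z => u v; apply/eqP; rewrite eq_complex /=; apply/andP; split; apply/eqP; ring.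
Qed.

Lemma normcX (z : R[i]) m : normc (z ^+ m) = normc z ^+ m.
Proof. by elim: m => [|m IH]; rewrite ?normc1 // !exprS normcM IH. Qed.

Lemma normc_sum (I : Type) (r : seq I) (P : pred I) (F : I -> R[i]) :
  normc (\sum_(i <- r | P i) F i) <= \sum_(i <- r | P i) normc (F i).
Proof.
elim/big_rec2: _ => [|i a b _ Hab]; first by rewrite normc0.
exact: le_trans (le_normcD _ _) (lerD _ Hab).
Qed.

End ComplexNorm.

Section Envelope.
Variable R : realType.
Local Open Scope complex_scope.

Lemma normc_qpsk (m : 'I_4) : normc (qpsk R m) = 1.
Proof. by rewrite normcX /= expr0n expr1n add0r sqrtr1 expr1n. Qed.

Lemma normc_cexpj (th : R) : normc (cexpj th) = 1.
Proof. by rewrite /cexpj /= cos2Dsin2 sqrtr1. Qed.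

Lemma normc_Ssig_qpsk_le (f0 df t : R) N (s : qpsk_seq N) :
  normc (Ssig f0 df (qpsk_cplx R s) t) <= N%:R.
Proof.
rewrite /Ssig; apply: le_trans (normc_sum _ _ _) _.
rewrite (eq_bigr (fun _ => 1)) ?sumr_const ?card_ord //.
by move=> k _; rewrite normcM normc_qpsk normc_cexpj mulr1.
Qed.

Lemma normc_Ssig_le_sqrt_PEP (T f0 df t : R) N (s : qpsk_seq N) :
  0 <= t <= T ->
  normc (Ssig f0 df (qpsk_cplx R s) t) <= Num.sqrt (PEP T f0 df (qpsk_cplx R s)).
Proof.
move=> t_in; rewrite -[X in X <= _]ger0_norm ?normc_ge0 // -sqrtr_sqr ler_wsqrtr //.
apply: ub_le_sup; last by exists t => //=; rewrite in_itv.
exists (N%:R ^+ 2) => _ [u _ <-].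
by rewrite /Penv ler_sqr ?nnegrE ?normc_ge0 ?normc_Ssig_qpsk_le.
Qed.

Definition qam_scale : R[i] := (Num.sqrt 2 / 2)%:C * cexpj (pi / 4).

Lemma normc_qam_scale : normc qam_scale = Num.sqrt 2 / 2.
Proof. by rewrite normcM normc_cexpj mulr1 normc_real ger0_norm. Qed.

Lemma Ssig_qam n N (ss : {ffun 'I_n -> qpsk_seq N}) (f0 df t : R) :
  Ssig f0 df (qam R ss) t =
  qam_scale * \sum_(i < n) (2 ^+ (n.-1 - i))%:C * Ssig f0 df (qpsk_cplx R (ss i)) t.
Proof.
rewrite /Ssig big_distrr /=.
under [RHS]eq_bigr do rewrite !big_distrr /=.
rewrite exchange_big /=; apply: eq_bigr => k _.
rewrite -(mulrA qam_scale) big_distrl big_distrr /=.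
by apply: eq_bigr => i _; rewrite !mulrA.
Qed.

Lemma PEP_qam_le (T f0 df y r : R) n N (ss : {ffun 'I_n -> qpsk_seq N}) :
  0 <= T -> 0 <= y -> 0 <= r ->
  (forall (i : 'I_n) t, 0 <= t <= T ->
     normc (Ssig f0 df (qpsk_cplx R (ss i)) t) <= y ^+ i * r) ->
  PEP T f0 df (qam R ss) <= (\sum_(i < n) 2 ^+ (n.-1 - i) * y ^+ i) ^+ 2 * r ^+ 2 / 2.
Proof.
move=> T0 y0 r0 Hss; set Sy := \sum_(i < n) _.
have Sy0 : 0 <= Sy by rewrite sumr_ge0 // => i _; rewrite mulr_ge0 ?exprn_ge0.
have -> : Sy ^+ 2 * r ^+ 2 / 2 = (Num.sqrt 2 / 2 * Sy * r) ^+ 2.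
  by rewrite !exprMn sqr_sqrtr //; field.
apply: ge_sup => [|_ [t t_in <-]].
  by exists (Penv f0 df (qam R ss) 0), 0 => //=; rewrite in_itv /= lexx.
rewrite /Penv ler_sqr ?nnegrE ?mulr_ge0 ?divr_ge0 ?sqrtr_ge0 ?normc_ge0 //.
rewrite Ssig_qam normcM normc_qam_scale -[X in _ <= X]mulrA ler_wpM2l ?divr_ge0 ?sqrtr_ge0 //.
apply: le_trans (normc_sum _ _ _) _; rewrite big_distrl /=.
apply: ler_sum => i _; rewrite normcM normc_real ger0_norm ?exprn_ge0 //.
by rewrite -mulrA ler_wpM2l ?exprn_ge0 // Hss.
Qed.

End Envelope.

Section AveragePower.
Variables (R : realType) (n N : nat) (S : 'I_n -> {set qpsk_seq N}).
Hypothesis S_rot : forall (i : 'I_n) (s : qpsk_seq N) (m : 'I_4),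
  s \in S i -> qrot m s \in S i.
Local Open Scope complex_scope.

Let ord1 : 'I_4 := @Ordinal 4 1 isT.
Let ord3 : 'I_4 := @Ordinal 4 3 isT.

Lemma qrotK : cancel (qrot ord1) (@qrot N ord3).
Proof.
move=> s; apply/ffunP => k; rewrite !ffunE -addrA.
have -> : ord1 + ord3 = 0 by apply/val_inj.
by rewrite addr0.
Qed.

Lemma qpsk_add1 (a : 'I_4) : qpsk R (a + ord1) = 'i * qpsk R a.
Proof.
have i4 : ('i : R[i]) ^+ 4 = 1 by rewrite (exprM _ 2 2) sqr_i sqrrN expr1n.
by rewrite /qpsk /= (expr_mod _ i4) addn1 exprS.
Qed.

Lemma qpsk_mul_conj (a : 'I_4) : qpsk R a * conjc (qpsk R a) = 1.
Proof.
rewrite /qpsk rmorphXn /= -exprMn.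
have -> : ('i : R[i]) * conjc 'i = 1.
  by apply/eqP; rewrite eq_complex /=; apply/andP; split; apply/eqP; ring.
by rewrite expr1n.
Qed.

(* Multiplying the i-th component by j permutes [tuples S] and scales the
   cross term between components i and l by j, so that term sums to zero. *)
Definition rot_component (i : 'I_n) (ss : {ffun 'I_n -> qpsk_seq N}) :
  {ffun 'I_n -> qpsk_seq N} :=
  [ffun l => if l == i then qrot ord1 (ss l) else ss l].

Lemma rot_component_inj i : injective (rot_component i).
Proof.
move=> s1 s2 /ffunP E; apply/ffunP => l; have := E l; rewrite !ffunE.
by case: eqP => _ // /(congr1 (qrot ord3)); rewrite !qrotK.
Qed.

Lemma rot_component_tuples i ss :
  (rot_component i ss \in tuples S) = (ss \in tuples S).
Proof.
rewrite !inE; apply/forallP/forallP => H l; have := H l; rewrite ffunE.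
  by case: eqP => [->|_] // /(S_rot ord3); rewrite qrotK.
by case: eqP => [->|_] //; exact: S_rot.
Qed.

Lemma sum_tuples_cross (i l : 'I_n) (k : 'I_N) : i != l ->
  \sum_(ss in tuples S) qpsk R (ss i k) * conjc (qpsk R (ss l k)) = 0.
Proof.
move=> il; set X := (X in X = 0).
have XE : X = 'i * X.
  rewrite {1}/X (reindex_inj (@rot_component_inj i)) /= big_distrr /=.
  apply: eq_big => ss; first exact: rot_component_tuples.
  by move=> _; rewrite !ffunE eqxx eq_sym (negbTE il) ffunE qpsk_add1 mulrA.
apply/eqP; move/eqP: XE; rewrite -subr_eq0 -{1}[X]mul1r -mulrBl mulf_eq0.
by rewrite subr_eq0 eq_complex /= oner_eq0.
Qed.

Lemma sum_tuples_sqr_normc (c : 'I_n -> R) (k : 'I_N) :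
  \sum_(ss in tuples S) normc (\sum_(i < n) (c i)%:C * qpsk R (ss i k)) ^+ 2
  = #|tuples S|%:R * \sum_(i < n) c i ^+ 2.
Proof.
apply: (@complexI R); rewrite rmorph_sum /=.
under eq_bigr do rewrite normc_sqr_conj rmorph_sum big_distrl /=.
under eq_bigr do under eq_bigr do rewrite big_distrr /=.
rewrite rmorphM rmorph_nat rmorph_sum mulr_sumr /= exchange_big /=.
apply: eq_bigr => i _; rewrite exchange_big /=.
under eq_bigr do under eq_bigr do rewrite conjc_scale mulrACA.
rewrite (bigD1 i) //= [X in _ + X]big1 ?addr0 => [|l li].
  under eq_bigr do rewrite qpsk_mul_conj mulr1.
  by rewrite sumr_const mulr_natl expr2 rmorphM.
by rewrite -big_distrr /= sum_tuples_cross ?mulr0 // eq_sym.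
Qed.

Lemma Pav_eq : (0 < #|tuples S|)%N ->
  Pav R S = N%:R * (\sum_(i < n) (2 ^+ (n.-1 - i)) ^+ 2) / 2.
Proof.
move=> S_gt0; rewrite /Pav /sqnorm exchange_big /=.
under eq_bigr => k _.
  under eq_bigr do rewrite /qam -/(qam_scale R) normcM normc_qam_scale exprMn.
  rewrite -big_distrr /= sum_tuples_sqr_normc expr_div_n sqr_sqrtr //.
  over.
rewrite sumr_const card_ord -mulr_natl; field.
by rewrite pnatr_eq0 -lt0n S_gt0.
Qed.

End AveragePower.

Section GeometricSums.
Variable R : comNzRingType.

Lemma sum_pow2_geometric (y : R) n :
  (\sum_(i < n) 2 ^+ (n.-1 - i) * y ^+ i) * (2 - y) = 2 ^+ n - y ^+ n.
Proof.
elim: n => [|n IH]; first by rewrite big_ord0 mul0r !expr0 subrr.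
rewrite big_ord_recl /= subn0 expr0 mulr1.
have -> : \sum_(i < n) 2 ^+ (n - bump 0 i) * y ^+ bump 0 i =
    y * \sum_(i < n) 2 ^+ (n.-1 - i) * y ^+ i.
  rewrite big_distrr /=; apply: eq_bigr => i _.
  by rewrite /bump /= add1n subnS predn_sub exprS mulrCA.
by rewrite mulrDl -mulrA IH !exprS; ring.
Qed.

Lemma sum_sqr_pow2 n : 3 * \sum_(i < n) (2 ^+ (n.-1 - i)) ^+ 2 = 4 ^+ n - 1 :> R.
Proof.
have sqr2 m : (2 ^+ m) ^+ 2 = 4 ^+ m :> R.
  by rewrite -exprM mulnC exprM expr2; congr (_ ^+ _); ring.
rewrite (eq_bigr (fun i : 'I_n => 4 ^+ (n.-1 - i))) => [|i _]; last exact: sqr2.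
elim: n => [|n IH]; first by rewrite big_ord0 mulr0 expr0 subrr.
rewrite big_ord_recl /= subn0.
under eq_bigr do rewrite /bump /= add1n subnS predn_sub.
by rewrite mulrDr IH exprS; ring.
Qed.

End GeometricSums.

Section RatioBound.
Variable R : realFieldType.

Lemma sum_sqr_pow2_gt0 n : (1 <= n)%N -> 0 < \sum_(i < n) (2 ^+ (n.-1 - i)) ^+ 2 :> R.
Proof.
by move=> n1; rewrite -(@pmulr_rgt0 _ 3) // sum_sqr_pow2 subr_gt0 exprn_egt1 ?ltr1n // -lt0n.
Qed.

(* With b = (1 + e)^n in [1, 2^n], (2^n - b)^2 <= 4^n - 2^n < 4^n - 1. *)
Lemma qam_ratio_lt (x e : R) n : 0 < x -> 0 <= e -> e < 1 -> (1 <= n)%N ->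
  x * (\sum_(i < n) 2 ^+ (n.-1 - i) * (1 + e) ^+ i) ^+ 2 /
    (\sum_(i < n) (2 ^+ (n.-1 - i)) ^+ 2) < 3 * x / (1 - e) ^+ 2.
Proof.
move=> x0 e0 e1 n1.
set Sy := \sum_(i < n) _ * _; set Q := \sum_(i < n) _ ^+ 2.
have Q0 : 0 < Q := sum_sqr_pow2_gt0 n1.
have hS : Sy * (1 - e) = 2 ^+ n - (1 + e) ^+ n.
  by rewrite -sum_pow2_geometric; congr (_ * _); ring.
have hQ : 3 * Q = (2 ^+ n) ^+ 2 - 1.
  by rewrite sum_sqr_pow2 -exprM mulnC exprM; congr (_ ^+ _ - 1); ring.
have h2n : 2 <= (2 : R) ^+ n by rewrite ler_eXnr ?ler1n.
have hb1 : 1 <= (1 + e) ^+ n by rewrite exprn_ege1 // lerDl.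
have hb2 : (1 + e) ^+ n <= (2 : R) ^+ n by rewrite lerXn2r ?nnegrE; lra.
have gap : (Sy * (1 - e)) ^+ 2 < 3 * Q.
  rewrite hS hQ; move: h2n hb1 hb2.
  set a := 2 ^+ n; set b := (1 + e) ^+ n => *; nra.
rewrite -subr_gt0.
have -> : 3 * x / (1 - e) ^+ 2 - x * Sy ^+ 2 / Q =
    x * (3 * Q - (Sy * (1 - e)) ^+ 2) / (Q * (1 - e) ^+ 2).
  by field; rewrite subr_eq0 !gt_eqF.
by rewrite divr_gt0 ?mulr_gt0 ?exprn_gt0 ?subr_gt0.
Qed.

End RatioBound.

Lemma card_tuples_gt0 n N (S : 'I_n -> {set qpsk_seq N}) :
  (forall i, S i != finset.set0) -> (0 < #|tuples S|)%N.
Proof.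
move=> S_neq0; apply/card_gt0P.
exists [ffun i => odflt [ffun=> ord0] [pick s in S i]]; rewrite inE.
apply/forallP => i; rewrite ffunE; case: pickP => //= S0.
by have/set0Pn [s] := S_neq0 i; rewrite S0.
Qed.

Lemma PMEPR_lt (R : realType) (T f0 df x eps : R) (N n : nat)
    (S : 'I_n -> {set qpsk_seq N}) :
  0 < T -> 0 < x -> 0 <= eps -> eps < 1 -> (1 <= N)%N -> (1 <= n)%N ->
  (forall i, S i != finset.set0) ->
  (forall (i : 'I_n) (s : qpsk_seq N), s \in S i ->
     PEP T f0 df (qpsk_cplx R s) <= x * (1 + eps) ^+ (2 * i) * N%:R) ->
  (forall (i : 'I_n) (s : qpsk_seq N) (m : 'I_4), s \in S i -> qrot m s \in S i) ->
  PMEPR T f0 df S < 3 * x / (1 - eps) ^+ 2.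
Proof.
move=> T0 x0 e0 e1 N1 n1 S_neq0 S_PEP S_rot.
pose Sy := \sum_(i < n) 2 ^+ (n.-1 - i) * (1 + eps) ^+ i.
pose Q : R := \sum_(i < n) (2 ^+ (n.-1 - i)) ^+ 2.
pose r := Num.sqrt (x * N%:R).
have xN0 : 0 <= x * N%:R by rewrite mulr_ge0 ?ler0n ?ltW.
have PEP_le ss : ss \in tuples S ->
    PEP T f0 df (qam R ss) <= Sy ^+ 2 * r ^+ 2 / 2.
  rewrite inE => /forallP ss_in; apply: PEP_qam_le; rewrite ?sqrtr_ge0 ?ltW //; first lra.
  move=> i t t_in; apply: le_trans (normc_Ssig_le_sqrt_PEP _ _ _ t_in) _.
  rewrite -[_ * r]ger0_norm ?mulr_ge0 ?exprn_ge0 ?sqrtr_ge0 //; try lra.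
  rewrite -sqrtr_sqr ler_wsqrtr // exprMn sqr_sqrtr // -exprM mulnC mulrCA mulrA.
  exact: S_PEP.
have max_le : \big[Num.max/0]_(ss in tuples S) PEP T f0 df (qam R ss)
    <= Sy ^+ 2 * r ^+ 2 / 2.
  elim/big_ind: _ => [|a b a_le b_le|]; last exact: PEP_le.
    by rewrite divr_ge0 // mulr_ge0 // sqr_ge0.
  by rewrite ge_max a_le b_le.
have Q0 : 0 < Q := sum_sqr_pow2_gt0 R n1.
have N0 : 0 < N%:R :> R by rewrite ltr0n.
rewrite /PMEPR Pav_eq ?card_tuples_gt0 // -/Q.
apply: le_lt_trans (qam_ratio_lt x0 e0 e1 n1); rewrite -/Sy -/Q.
have -> : x * Sy ^+ 2 / Q = Sy ^+ 2 * r ^+ 2 / 2 / (N%:R * Q / 2).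
  by rewrite sqr_sqrtr //; field; rewrite !gt_eqF.
by rewrite ler_wpM2r // invr_ge0 divr_ge0 ?mulr_ge0 ?ltW.
Qed.

(* The quotient equals c e (3 - 2 e) / (1 - e)^2, continuous at 0 where it vanishes. *)
Lemma little_o_gap (R : realType) (c : R) :
  (fun e => (c / (1 - e) ^+ 2 - c * (1 + 2 * e)) / e) @ 0^'+ --> 0.
Proof.
have h0 : (fun e : R => c * (e * (3 - 2 * e)) / ((1 - e) * (1 - e))) @ 0
    --> c * (0 * (3 - 2 * 0)) / ((1 - 0) * (1 - 0)).
  have lin a b : (fun e : R => a - b * e) @ 0 --> a - b * 0.
    by apply: cvgB; [exact: cvg_cst | apply: cvgM; [exact: cvg_cst | exact: cvg_id]].
  have cvg_1B : (fun e : R => 1 - e) @ 0 --> (1 - 0 : R).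
    by apply: cvgB; [exact: cvg_cst | exact: cvg_id].
  apply: cvgM; first by apply: cvgM; [exact: cvg_cst | apply: cvgM; [exact: cvg_id | exact: lin]].
  by apply: cvgV; [rewrite subr0 mulr1 oner_neq0 | exact: cvgM].
rewrite !mul0r mulr0 mul0r in h0.
apply: cvg_trans (cvg_at_right_filter h0); apply: near_eq_cvg; near=> e.
have e0 : 0 < e by near: e; exact: nbhs_right_gt.
have e1 : e < 1 by near: e; exact: nbhs_right_lt.
by field; rewrite subr_eq0 !gt_eqF.
Unshelve. all: by end_near.
Qed.

Theorem corollary2 (R : realType) (T f0 df : R) (x : R) :
  0 < T -> (exists m : nat, (0 < m)%N /\ T * df = m%:R) -> 1 < x ->
  exists g : R -> R,
    ((fun e => g e / e) @ 0^'+ --> 0) /\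
    forall (eps : R) (N n : nat) (S : 'I_n -> {set qpsk_seq N}),
      0 <= eps -> eps < 1 -> (1 <= N)%N -> (1 <= n)%N ->
      (forall i, S i != finset.set0) ->
      (forall (i : 'I_n) (s : qpsk_seq N), s \in S i ->
         PEP T f0 df (qpsk_cplx R s) <= x * (1 + eps) ^+ (2 * i) * N%:R) ->
      (forall (i : 'I_n) (s : qpsk_seq N) (m : 'I_4), s \in S i -> qrot m s \in S i) ->
      PMEPR T f0 df S < 3 * x * (1 + 2 * eps) + g eps /\
      PMEPR T f0 df S < 3 * x * (1 + eps) ^+ 2 + g eps.
Proof.
move=> T0 _ x1; have x0 : 0 < x by lra.
exists (fun e => 3 * x / (1 - e) ^+ 2 - 3 * x * (1 + 2 * e)).
split; first exact: little_o_gap.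
move=> eps N n S e0 e1 N1 n1 S_neq0 S_PEP S_rot.
have lt_bound := PMEPR_lt T0 x0 e0 e1 N1 n1 S_neq0 S_PEP S_rot.
split; first by rewrite addrC subrK.
by apply: lt_le_trans lt_bound _; rewrite addrCA lerDl subr_ge0; nra.
Qed.
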